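(* (i) Let $p, m, r \in \mathbb N$. Then \begin{align*} S(p,m,1,r,0) &=\sum_{i=2}^{m}\frac{(-1)^{m-i}}{r^{m-i+1}}S_{p,i}^{+,+}+\frac{(-1)^{m-1}}{r^{m}}\zeta(p+1)\\ &\quad +\frac{(-1)^{m-1}}{r^{m}}\left(\sum_{j=1}^{r-1}\frac{(-1)^{p+1}H_j}{j^p} +\sum_{\ell=2}^{p}(-1)^{p-\ell}H_{r-1}^{(p-\ell+1)}\zeta(\ell)\right)\,. \end{align*} (ii) Let $m, r \in \mathbb N$, $p \in \mathbb N_{0}$ with $m \geq p+2$. Then \begin{align*} S(-p,m,1,r,0) =\frac{1}{p+1}\sum_{\ell=0}^{p} \binom{p+1}{\ell}B_{\ell}^{+} \left(\sum_{i=2}^{m-p-1+\ell}\frac{(-1)^{m-p-1+\ell-i}}{r^{m-p+\ell-i}}\zeta(i) +\frac{(-1)^{m-p-2+\ell}}{r^{m-p-1+\ell}} H_{r}\right)\,. \end{align*}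
   Context: $H_n^{(q)}=\sum_{j=1}^n j^{-q}$ for $q\in\mathbb N$, $H_n=H_n^{(1)}$, $H_0^{(q)}=0$; for an integer $q\ge0$, $H_n^{(-q)}=\sum_{\ell=1}^n\ell^q$. For $q\in\mathbb Z$ and $m,t,r\in\mathbb N$, $S(q,m,t,r,0):=\sum_{n=1}^\infty\frac{H_n^{(q)}}{n^{m}(n+r)^{t}}$. $S_{p,q}^{+,+}:=\sum_{n=1}^\infty H_n^{(p)}/n^q$. $\zeta$ is the Riemann zeta function. Bernoulli numbers $B_j^{+}$: $\frac{x}{1-e^{-x}}=\sum_{j\ge0}B_j^{+}\frac{x^j}{j!}$. Empty sums are $0$. *)

From Stdlib Require Import Reals Lra Lia ZArith Arith List.
From Coquelicot Require Import Coquelicot.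
Open Scope R_scope.

(* sum_{i=a}^{b} f i over naturals, empty (= 0) when b < a *)
Definition sumR (a b : nat) (f : nat -> R) : R :=
  fold_right Rplus 0 (map f (seq a (b + 1 - a))).

Definition H (q : Z) (n : nat) : R :=
  if (0 <? q)%Z then sumR 1 n (fun j => / (INR j ^ Z.to_nat q))
  else sumR 1 n (fun l => INR l ^ Z.to_nat (- q)).

(* k-th term (k >= 0, i.e. n = k+1) of S(q,m,t,r,0) *)
Definition S_term (q : Z) (m t r : nat) (k : nat) : R :=
  H q (S k) / (INR (S k) ^ m * INR (S k + r) ^ t).

Definition Spp (p : Z) (q : nat) : R :=
  Series (fun k => H p (S k) / INR (S k) ^ q).

Definition zeta (s : nat) : R := Series (fun k => / INR (S k) ^ s).

Definition bern_gf (x : R) : R :=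
  if Req_EM_T x 0 then 1 else x / (1 - exp (- x)).

(* B_j^+ : x/(1-e^{-x}) = sum_j B_j^+ x^j / j!, i.e. B_j^+ = j-th derivative at 0 *)
Definition Bplus (j : nat) : R := Derive_n bern_gf j 0.

From Stdlib Require Import Reals ZArith Arith List Lra Lia.
From Coquelicot Require Import Coquelicot.
Open Scope R_scope.

(* The partial fraction 1/(n^(m+1)(n+r)) = (1/r)(1/n^(m+1) - 1/(n^m(n+r))) turns
   sum_n a_n/(n^m(n+r)) into a first-order recursion in m, solved by an alternating
   sum whose inputs are the series sum_n a_n/n^m (zeta or S^{+,+}) and the case m = 1.  For a_n = 1 that case telescopes to H_r/r.  For a_n = H_n^(p) it is an
   Abel summation against c_n = H_(n+r) - H_n, since r/(n(n+r)) = c_(n-1) - c_n and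
   c_(n-1) = 1/n + sum_(0<i<r) 1/(n+i); the boundary term H_N^(p) c_N vanishes because
   H_N^(p) = o(N).  For a negative index, Faulhaber's formula writes H_n^(-p) as a
   polynomial in n, reducing everything to a_n = 1.  The B_l^+ are the Taylor coefficients
   of the reciprocal of (1 - e^(-x))/x, which yields sum_(l<q) C(q,l) B_l^+ (-1)^(q-l) = 0
   for q >= 2, the identity behind Faulhaber's formula. *)

(* [fsum f n] is [f 0 + ... + f (n - 1)]; unlike [sum_f_R0] and [sum_n] it can be empty. *)
Fixpoint fsum (f : nat -> R) (n : nat) : R :=
  match n with O => 0 | S k => fsum f k + f k end.

Lemma fsum_ext f g n : (forall k, (k < n)%nat -> f k = g k) -> fsum f n = fsum g n.
Proof.
  induction n as [|n IH]; intros Hfg; simpl; [reflexivity|].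
  rewrite IH, Hfg; [reflexivity | lia | intros; apply Hfg; lia].
Qed.

Lemma fsum_plus f g n : fsum (fun k => f k + g k) n = fsum f n + fsum g n.
Proof. induction n; simpl; [lra | rewrite IHn; lra]. Qed.

Lemma fsum_minus f g n : fsum (fun k => f k - g k) n = fsum f n - fsum g n.
Proof. induction n; simpl; [lra | rewrite IHn; lra]. Qed.

Lemma fsum_scal_l c f n : fsum (fun k => c * f k) n = c * fsum f n.
Proof. induction n; simpl; [lra | rewrite IHn; lra]. Qed.

Lemma fsum_zero n : fsum (fun _ => 0) n = 0.
Proof. induction n; simpl; [lra | rewrite IHn; lra]. Qed.

Lemma fsum_le f g n : (forall k, (k < n)%nat -> f k <= g k) -> fsum f n <= fsum g n.
Proof.
  induction n as [|n IH]; intros Hfg; simpl; [lra|].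
  pose proof (Hfg n (Nat.lt_succ_diag_r n)).
  enough (fsum f n <= fsum g n) by lra. apply IH. intros; apply Hfg; lia.
Qed.

Lemma Rabs_fsum_le f n : Rabs (fsum f n) <= fsum (fun k => Rabs (f k)) n.
Proof.
  induction n; simpl; [rewrite Rabs_R0; lra|].
  eapply Rle_trans; [apply Rabs_triang | lra].
Qed.

Lemma fsum_Sl f n : fsum f (S n) = f O + fsum (fun k => f (S k)) n.
Proof.
  induction n as [|n IH]; [simpl; lra|].
  change (fsum f (S (S n))) with (fsum f (S n) + f (S n)). rewrite IH. simpl. lra.
Qed.

Lemma fsum_rev f n : fsum f n = fsum (fun k => f (n - 1 - k)%nat) n.
Proof.
  induction n as [|n IH]; [reflexivity|].
  rewrite (fsum_Sl (fun k => f (S n - 1 - k)%nat)). simpl fsum at 1. rewrite IH.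
  replace (S n - 1 - 0)%nat with n by lia. rewrite Rplus_comm. f_equal.
  apply fsum_ext. intros k _. f_equal. lia.
Qed.

Lemma fsum_swap (f : nat -> nat -> R) n m :
  fsum (fun i => fsum (f i) m) n = fsum (fun j => fsum (fun i => f i j) n) m.
Proof.
  induction n as [|n IH]; simpl; [now rewrite fsum_zero|].
  rewrite IH, <- fsum_plus. reflexivity.
Qed.

Lemma fsum_extend f k n : (k <= n)%nat ->
  fsum f k = fsum (fun b => if (b <? k)%nat then f b else 0) n.
Proof.
  induction n as [|n IH]; intros Hk.
  - replace k with O by lia. reflexivity.
  - destruct (Nat.eq_dec k (S n)) as [->|Hne].
    + apply fsum_ext. intros b Hb. destruct (Nat.ltb_spec b (S n)); [reflexivity | lia].
    + simpl. rewrite IH by lia. destruct (Nat.ltb_spec n k); [lia | lra].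
Qed.

Lemma fsum_triangle_swap (f : nat -> nat -> R) N :
  fsum (fun a => fsum (f a) (N - a)) N = fsum (fun b => fsum (fun a => f a b) (N - b)) N.
Proof.
  transitivity (fsum (fun a => fsum (fun b => if (a + b <? N)%nat then f a b else 0) N) N).
  - apply fsum_ext. intros a Ha. rewrite (fsum_extend _ (N - a) N) by lia.
    apply fsum_ext. intros b _.
    destruct (Nat.ltb_spec b (N - a)), (Nat.ltb_spec (a + b) N); lia || reflexivity.
  - rewrite fsum_swap. apply fsum_ext. intros b Hb. rewrite (fsum_extend _ (N - b) N) by lia.
    apply fsum_ext. intros a _.
    destruct (Nat.ltb_spec a (N - b)), (Nat.ltb_spec (a + b) N); lia || reflexivity.
Qed.

Lemma fsum_by_parts (a c : nat -> R) N :
  fsum (fun k => fsum a (S k) * (c k - c (S k))) N = fsum (fun k => a k * c k) N - fsum a N * c N.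
Proof. induction N as [|N IH]; simpl in *; [ring | rewrite IH; ring]. Qed.

Lemma sum_f_R0_fsum f n : sum_f_R0 f n = fsum f (S n).
Proof. induction n; simpl in *; [lra | now rewrite IHn]. Qed.

Lemma sumR_fsum a b f : sumR a b f = fsum (fun k => f (a + k)%nat) (b + 1 - a).
Proof.
  unfold sumR. generalize (b + 1 - a)%nat as n. intros n. revert a.
  induction n as [|n IH]; intros a; [reflexivity|].
  cbn [seq map fold_right]. rewrite IH, fsum_Sl, Nat.add_0_r. f_equal.
  apply fsum_ext. intros k _. f_equal. lia.
Qed.

Lemma sumR_ext a b f g : (forall i, (a <= i <= b)%nat -> f i = g i) -> sumR a b f = sumR a b g.
Proof. intros Hfg. rewrite !sumR_fsum. apply fsum_ext. intros k Hk. apply Hfg. lia. Qed.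

Lemma sumR_Sr a b f : (a <= S b)%nat -> sumR a (S b) f = sumR a b f + f (S b).
Proof.
  intros Hab. rewrite !sumR_fsum. replace (S b + 1 - a)%nat with (S (b + 1 - a)) by lia.
  simpl. do 2 f_equal. lia.
Qed.

Lemma sumR_scal_l a b c f : sumR a b (fun i => c * f i) = c * sumR a b f.
Proof. rewrite !sumR_fsum. apply fsum_scal_l. Qed.

Lemma is_series_fsum_iff (a : nat -> R) l :
  is_series a l <-> is_lim_seq (fun N => fsum a (S N)) l.
Proof.
  assert (E : forall N, sum_n a N = fsum a (S N)).
  { intros N. rewrite sum_n_Reals. apply sum_f_R0_fsum. }
  split; intros Hl.
  - apply is_lim_seq_ext with (sum_n a); [exact E | exact Hl].
  - apply (is_lim_seq_ext _ (sum_n a)) in Hl; [exact Hl | intros; symmetry; apply E].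
Qed.

(* Versions of [is_series_ext] and [is_series_scal_l] whose terms live in [R] rather than
   in a [NormedModule] carrier, so that [ring] and [field] apply to the side goals. *)
Lemma is_series_ext_R (a b : nat -> R) l :
  (forall n, a n = b n) -> is_series a l -> is_series b l.
Proof. apply is_series_ext. Qed.

Lemma is_series_scal_R c (a : nat -> R) l : is_series a l -> is_series (fun n => c * a n) (c * l).
Proof. intros Ha. exact (is_series_scal_l c a l Ha). Qed.

Lemma is_series_fsum (u : nat -> nat -> R) (v : nat -> R) N :
  (forall l, (l < N)%nat -> is_series (u l) (v l)) ->
  is_series (fun n => fsum (fun l => u l n) N) (fsum v N).
Proof.
  induction N as [|N IH]; intros Hu; simpl.
  - apply is_series_fsum_iff. apply is_lim_seq_ext with (fun _ => 0).
    + intros; symmetry; apply fsum_zero.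
    + apply is_lim_seq_const.
  - apply (is_series_plus (fun n => fsum (fun l => u l n) N) (u N)).
    + apply IH. intros; apply Hu; lia.
    + apply Hu; lia.
Qed.

Lemma is_series_telescope (c : nat -> R) (L : R) :
  is_lim_seq c L -> is_series (fun n => c n - c (S n)) (c O - L).
Proof.
  intros Hc. apply is_series_fsum_iff.
  apply is_lim_seq_ext with (fun N => c O - c (S N)).
  - intros N. induction N as [|N IH]; simpl in *; lra.
  - apply is_lim_seq_minus'; [apply is_lim_seq_const | apply (is_lim_seq_incr_1 c), Hc].
Qed.

Lemma INR_S_pos n : 0 < INR (S n).
Proof. apply lt_0_INR; lia. Qed.

Lemma is_lim_seq_inv_S : is_lim_seq (fun n => / INR (S n)) 0.
Proof.
  apply (is_lim_seq_incr_1 (fun n => / INR n)).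
  replace (Finite 0) with (Rbar_inv p_infty) by reflexivity.
  apply is_lim_seq_inv; [apply is_lim_seq_INR | discriminate].
Qed.

Lemma inv_pow_le_telescope j n : (2 <= j)%nat ->
  0 <= / INR (S n) ^ j <= 2 * (/ INR (S n) - / INR (S (S n))).
Proof.
  intros Hj. rewrite (S_INR (S n)). pose proof (INR_S_pos n) as Hn.
  set (x := INR (S n)) in *.
  assert (Hx : 1 <= x) by (unfold x; rewrite S_INR; pose proof (pos_INR n); lra).
  split; [apply Rlt_le, Rinv_0_lt_compat, pow_lt; lra|].
  replace (2 * (/ x - / (x + 1))) with (/ (x * (x + 1) / 2)) by (field; lra).
  apply Rinv_le_contravar; [nra|].
  replace j with (2 + (j - 2))%nat by lia. rewrite pow_add.
  assert (1 <= x ^ (j - 2)) by (apply pow_R1_Rle; lra). simpl pow. nra.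
Qed.

Lemma zeta_series j : (2 <= j)%nat -> is_series (fun n => / INR (S n) ^ j) (zeta j).
Proof.
  intros Hj. apply Series_correct.
  apply (ex_series_le (V := R_CompleteNormedModule)) with (fun n => 2 * (/ INR (S n) - / INR (S (S n)))).
  - intros n. destruct (inv_pow_le_telescope j n Hj).
    change (norm ?x) with (Rabs x). rewrite Rabs_pos_eq; assumption.
  - eexists. apply is_series_scal_R, (is_series_telescope (fun n => / INR (S n))), is_lim_seq_inv_S.
Qed.

(** * Partial fractions in n + r *)

(* The solution of [u (S m) = (f (S m) - u m) / r] with [u 1 = X / r]. *)
Definition pf_unroll (f : nat -> R) (X r : R) (m : nat) : R :=
  sumR 2 m (fun i => (-1) ^ (m - i) / r ^ (m - i + 1) * f i) + (-1) ^ (m - 1) / r ^ m * X.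

Lemma pf_unroll_1 f X r : pf_unroll f X r 1 = X / r.
Proof. unfold pf_unroll. rewrite sumR_fsum. simpl. rewrite Rmult_1_r. unfold Rdiv. ring. Qed.

Lemma pf_unroll_S f X r m : r <> 0 -> (1 <= m)%nat ->
  pf_unroll f X r (S m) = / r * (f (S m) - pf_unroll f X r m).
Proof.
  intros Hr Hm. unfold pf_unroll. rewrite sumR_Sr by lia.
  rewrite (sumR_ext 2 m _ (fun i => - / r * ((-1) ^ (m - i) / r ^ (m - i + 1) * f i))).
  - rewrite sumR_scal_l, Nat.sub_diag. destruct m as [|m]; [lia|].
    replace (S (S m) - 1)%nat with (S m) by lia. replace (S m - 1)%nat with m by lia.
    assert (r ^ m <> 0) by (apply pow_nonzero; exact Hr).
    simpl pow. field. split; assumption.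
  - intros i Hi. replace (S m - i)%nat with (S (m - i)) by lia.
    assert (r ^ (m - i + 1) <> 0) by (apply pow_nonzero; exact Hr).
    replace (S (m - i) + 1)%nat with (S (m - i + 1)) by lia. simpl pow. field. split; assumption.
Qed.

Lemma partial_fraction_step a x r m : 0 < x -> 0 < r ->
  a / (x ^ S m * (x + r)) = / r * (a / x ^ S m - a / (x ^ m * (x + r))).
Proof.
  intros Hx Hr. assert (x ^ m <> 0) by (apply pow_nonzero; lra).
  simpl pow. field. repeat split; lra.
Qed.

Lemma is_series_pf_unroll (a f : nat -> R) X r : (1 <= r)%nat ->
  is_series (fun n => a n / (INR (S n) * INR (S n + r))) (X / INR r) ->
  (forall m, (2 <= m)%nat -> is_series (fun n => a n / INR (S n) ^ m) (f m)) ->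
  forall m, (1 <= m)%nat ->
  is_series (fun n => a n / (INR (S n) ^ m * INR (S n + r))) (pf_unroll f X (INR r) m).
Proof.
  intros Hr Hbase Hf m Hm. induction m as [|m IH]; [lia|].
  assert (Hr0 : 0 < INR r) by (apply lt_0_INR; lia).
  destruct (Nat.eq_dec m 0) as [->|Hm0].
  - rewrite pf_unroll_1. eapply is_series_ext_R; [|exact Hbase]. intros n. now rewrite pow_1.
  - rewrite pf_unroll_S by lra || lia.
    apply is_series_ext_R with
      (fun n => / INR r * (a n / INR (S n) ^ S m - a n / (INR (S n) ^ m * INR (S n + r)))).
    + intros n. rewrite plus_INR. symmetry. apply partial_fraction_step; [apply INR_S_pos | exact Hr0].
    + apply is_series_scal_R, (is_series_minus (fun n => a n / INR (S n) ^ S m)).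
      * apply Hf. lia.
      * apply IH. lia.
Qed.

Definition harm (p n : nat) : R := fsum (fun k => / INR (S k) ^ p) n.

Definition harm_diff (r n : nat) : R := fsum (fun j => / INR (S n + j)) r.

Lemma H_of_nat p n : (1 <= p)%nat -> H (Z.of_nat p) n = harm p n.
Proof.
  intros Hp. unfold H. replace (0 <? Z.of_nat p)%Z with true by (symmetry; apply Z.ltb_lt; lia).
  rewrite Nat2Z.id, sumR_fsum. replace (n + 1 - 1)%nat with n by lia. reflexivity.
Qed.

Lemma H_opp_of_nat p n : H (- Z.of_nat p) n = fsum (fun k => INR (S k) ^ p) n.
Proof.
  unfold H. replace (0 <? - Z.of_nat p)%Z with false by (symmetry; apply Z.ltb_ge; lia).
  rewrite Z.opp_involutive, Nat2Z.id, sumR_fsum. replace (n + 1 - 1)%nat with n by lia. reflexivity.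
Qed.

Lemma harm_nonneg p n : 0 <= harm p n.
Proof.
  unfold harm. rewrite <- (fsum_zero n). apply fsum_le. intros k _.
  apply Rlt_le, Rinv_0_lt_compat, pow_lt, INR_S_pos.
Qed.

Lemma harm_diff_0 r : harm_diff r 0 = harm 1 r.
Proof. apply fsum_ext. intros k _. now rewrite pow_1. Qed.

Lemma harm_diff_step r n : harm_diff r n - harm_diff r (S n) = / INR (S n) - / INR (S n + r).
Proof.
  unfold harm_diff.
  assert (E : fsum (fun j => / INR (S n + j)) (S r) = fsum (fun j => / INR (S n + j)) r + / INR (S n + r))
    by reflexivity.
  rewrite fsum_Sl, Nat.add_0_r in E.
  replace (fsum (fun j => / INR (S (S n) + j)) r) with (fsum (fun k => / INR (S n + S k)) r); [lra|].
  apply fsum_ext. intros k _. do 2 f_equal. lia.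
Qed.

Lemma harm_diff_bounds r n : 0 <= harm_diff r n <= INR r / INR (S n).
Proof.
  unfold harm_diff. induction r as [|r IH]; cbn [fsum].
  - change (INR 0) with 0. unfold Rdiv. rewrite Rmult_0_l. lra.
  - assert (0 < / INR (S n + r) <= / INR (S n)).
    { split; [apply Rinv_0_lt_compat, lt_0_INR; lia|].
      apply Rinv_le_contravar; [apply INR_S_pos | apply le_INR; lia]. }
    rewrite (S_INR r). unfold Rdiv in *. rewrite Rmult_plus_distr_r, Rmult_1_l. lra.
Qed.

Lemma is_lim_seq_harm_diff r : is_lim_seq (harm_diff r) 0.
Proof.
  apply is_lim_seq_le_le with (fun _ => 0) (fun n => INR r * / INR (S n)).
  - apply harm_diff_bounds.
  - apply is_lim_seq_const.
  - replace (Finite 0) with (Rbar_mult (INR r) 0) by (simpl; f_equal; ring).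
    apply is_lim_seq_scal_l, is_lim_seq_inv_S.
Qed.

Lemma is_series_inv_mul_add r : (1 <= r)%nat ->
  is_series (fun n => 1 / (INR (S n) * INR (S n + r))) (harm 1 r / INR r).
Proof.
  intros Hr. assert (Hr0 : 0 < INR r) by (apply lt_0_INR; lia).
  apply is_series_ext_R with (fun n => / INR r * (harm_diff r n - harm_diff r (S n))).
  - intros n. rewrite harm_diff_step, plus_INR. pose proof (INR_S_pos n). field. lra.
  - replace (harm 1 r / INR r) with (/ INR r * (harm_diff r 0 - 0)) by (rewrite harm_diff_0; field; lra).
    apply is_series_scal_R, is_series_telescope, is_lim_seq_harm_diff.
Qed.

Lemma is_series_inv_pow_mul_add k r : (1 <= r)%nat -> (1 <= k)%nat ->
  is_series (fun n => 1 / (INR (S n) ^ k * INR (S n + r))) (pf_unroll zeta (harm 1 r) (INR r) k).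
Proof.
  intros Hr. apply is_series_pf_unroll; [exact Hr | apply is_series_inv_mul_add, Hr|].
  intros m Hm. eapply is_series_ext_R; [|apply zeta_series, Hm]. intros n. unfold Rdiv. ring.
Qed.

(** * Positive index: Abel summation *)

Lemma inv_pow_le_inv x p : 1 <= x -> (1 <= p)%nat -> 0 < / x ^ p <= / x.
Proof.
  intros Hx Hp. split; [apply Rinv_0_lt_compat, pow_lt; lra|].
  apply Rinv_le_contravar; [lra|]. rewrite <- (pow_1 x) at 1. apply Rle_pow; assumption.
Qed.

(* The increments of [harm p] tend to 0, so by Cesaro [harm p n = o(n)]. *)
Lemma is_lim_seq_harm_div p : (1 <= p)%nat -> is_lim_seq (fun n => harm p (S n) / INR (S n)) 0.
Proof.
  intros Hp.
  assert (Hinc : Un_cv (fun k => / INR (S k) ^ p) 0).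
  { apply is_lim_seq_Reals, is_lim_seq_le_le with (fun _ => 0) (fun k => / INR (S k)).
    - intros k. assert (1 <= INR (S k)) by (rewrite S_INR; pose proof (pos_INR k); lra).
      destruct (inv_pow_le_inv (INR (S k)) p); [assumption.. | lra].
    - apply is_lim_seq_const.
    - apply is_lim_seq_inv_S. }
  apply Cesaro_1, is_lim_seq_Reals, (is_lim_seq_incr_1 (fun n => _ / INR n)) in Hinc.
  eapply is_lim_seq_ext; [|exact Hinc]. intros n. cbv beta. now rewrite sum_f_R0_fsum.
Qed.

Lemma is_lim_seq_harm_mul_harm_diff p r : (1 <= p)%nat ->
  is_lim_seq (fun N => harm p N * harm_diff r N) 0.
Proof.
  intros Hp. apply (is_lim_seq_incr_1 (fun N => harm p N * harm_diff r N)).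
  apply is_lim_seq_le_le with (fun _ => 0) (fun n => INR r * (harm p (S n) / INR (S n))).
  - intros n. pose proof (harm_nonneg p (S n)). destruct (harm_diff_bounds r (S n)) as [Hc0 Hc].
    assert (INR r / INR (S (S n)) <= INR r / INR (S n)).
    { apply Rmult_le_compat_l; [apply pos_INR|].
      apply Rinv_le_contravar; [apply INR_S_pos | apply le_INR; lia]. }
    split; [now apply Rmult_le_pos|].
    replace (INR r * (harm p (S n) / INR (S n))) with (harm p (S n) * (INR r / INR (S n)))
      by (unfold Rdiv; ring).
    apply Rmult_le_compat_l; lra.
  - apply is_lim_seq_const.
  - replace (Finite 0) with (Rbar_mult (INR r) 0) by (simpl; f_equal; ring).
    apply is_lim_seq_scal_l, is_lim_seq_harm_div, Hp.
Qed.

Definition harm_diff_zeta (p r : nat) : R :=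
  zeta (p + 1) + fsum (fun i => pf_unroll zeta (harm 1 (S i)) (INR (S i)) p) (r - 1).

Lemma is_series_harm_diff_zeta p r : (1 <= p)%nat -> (1 <= r)%nat ->
  is_series (fun j => / INR (S j) ^ p * harm_diff r j) (harm_diff_zeta p r).
Proof.
  intros Hp Hr.
  apply is_series_ext_R with
    (fun j => / INR (S j) ^ (p + 1) + fsum (fun i => 1 / (INR (S j) ^ p * INR (S j + S i))) (r - 1)).
  - intros j. unfold harm_diff. destruct r as [|r]; [lia|].
    rewrite fsum_Sl, Nat.add_0_r, Nat.sub_succ, Nat.sub_0_r, Rmult_plus_distr_l, <- fsum_scal_l.
    pose proof (INR_S_pos j). f_equal.
    + rewrite pow_add, pow_1. field. split; [lra | apply pow_nonzero; lra].
    + apply fsum_ext. intros i _. unfold Rdiv. now rewrite Rmult_1_l, Rinv_mult.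
  - apply (is_series_plus (fun j => / INR (S j) ^ (p + 1))).
    + apply zeta_series. lia.
    + apply is_series_fsum. intros i _. apply is_series_inv_pow_mul_add; lia.
Qed.

Lemma is_series_S_term_1 p r : (1 <= p)%nat -> (1 <= r)%nat ->
  is_series (S_term (Z.of_nat p) 1 1 r) (harm_diff_zeta p r / INR r).
Proof.
  intros Hp Hr. assert (Hr0 : 0 < INR r) by (apply lt_0_INR; lia).
  apply is_series_ext_R with (fun n => / INR r * (harm p (S n) * (harm_diff r n - harm_diff r (S n)))).
  - intros n. unfold S_term. rewrite H_of_nat, harm_diff_step, plus_INR, !pow_1 by exact Hp.
    pose proof (INR_S_pos n). field. lra.
  - replace (harm_diff_zeta p r / INR r) with (/ INR r * (harm_diff_zeta p r - 0)) by (field; lra).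
    apply is_series_scal_R, is_series_fsum_iff.
    apply is_lim_seq_ext with
      (fun N => fsum (fun j => / INR (S j) ^ p * harm_diff r j) (S N) - harm p (S N) * harm_diff r (S N)).
    + intros N. symmetry. apply fsum_by_parts.
    + apply is_lim_seq_minus'.
      * apply is_series_fsum_iff, is_series_harm_diff_zeta; assumption.
      * apply (is_lim_seq_incr_1 (fun N => harm p N * harm_diff r N)), is_lim_seq_harm_mul_harm_diff, Hp.
Qed.

Lemma is_series_Spp p m : (1 <= p)%nat -> (2 <= m)%nat ->
  is_series (fun k => H (Z.of_nat p) (S k) / INR (S k) ^ m) (Spp (Z.of_nat p) m).
Proof.
  intros Hp Hm. apply Series_correct.
  apply (ex_series_le (V := R_CompleteNormedModule)) with (fun k => 2 * S_term (Z.of_nat p) 1 1 1 k).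
  - intros k. change (norm ?x) with (Rabs x). unfold S_term. rewrite H_of_nat by exact Hp.
    pose proof (harm_nonneg p (S k)). destruct (inv_pow_le_telescope m k Hm).
    rewrite Rabs_pos_eq by (apply Rmult_le_pos; assumption).
    replace (2 * (harm p (S k) / (INR (S k) ^ 1 * INR (S k + 1) ^ 1)))
      with (harm p (S k) * (2 * (/ INR (S k) - / INR (S (S k))))).
    + apply Rmult_le_compat_l; assumption.
    + rewrite !pow_1, (S_INR (S k)), plus_INR. pose proof (INR_S_pos k). simpl (INR 1). field. lra.
  - eexists. apply is_series_scal_R, is_series_S_term_1; lia.
Qed.

Lemma is_series_S_term_pos p m r : (1 <= p)%nat -> (1 <= m)%nat -> (1 <= r)%nat ->
  is_series (S_term (Z.of_nat p) m 1 r)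
    (pf_unroll (Spp (Z.of_nat p)) (harm_diff_zeta p r) (INR r) m).
Proof.
  intros Hp Hm Hr.
  assert (E : forall k n, S_term (Z.of_nat p) k 1 r n
                          = H (Z.of_nat p) (S n) / (INR (S n) ^ k * INR (S n + r))).
  { intros k n. unfold S_term. now rewrite pow_1. }
  eapply is_series_ext_R; [intros n; symmetry; apply E|].
  apply is_series_pf_unroll; [exact Hr | | | exact Hm].
  - eapply is_series_ext_R; [|apply is_series_S_term_1; assumption]. intros n. now rewrite E, pow_1.
  - intros k Hk. apply is_series_Spp; assumption.
Qed.

Lemma harm_diff_zeta_eq p r : (1 <= p)%nat ->
  harm_diff_zeta p r = zeta (p + 1) +
    (sumR 1 (r - 1) (fun j => (-1) ^ (p + 1) * H 1 j / INR j ^ p)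
     + sumR 2 p (fun l => (-1) ^ (p - l) * H (Z.of_nat (p - l + 1)) (r - 1) * zeta l)).
Proof.
  intros Hp. unfold harm_diff_zeta, pf_unroll. f_equal.
  rewrite fsum_plus, Rplus_comm. f_equal.
  - rewrite sumR_fsum. replace (r - 1 + 1 - 1)%nat with (r - 1)%nat by lia.
    apply fsum_ext. intros k _. rewrite (H_of_nat 1) by lia.
    replace (p + 1)%nat with (p - 1 + 2)%nat by lia. rewrite pow_add.
    unfold Rdiv. simpl. ring.
  - rewrite (fsum_ext _ (fun i => fsum (fun k => (-1) ^ (p - (2 + k)) / INR (S i) ^ (p - (2 + k) + 1)
                                               * zeta (2 + k)%nat) (p + 1 - 2)) (r - 1))
      by (intros; apply sumR_fsum).
    rewrite fsum_swap, sumR_fsum. apply fsum_ext. intros k _.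
    rewrite H_of_nat by lia. unfold harm.
    rewrite <- fsum_scal_l, Rmult_comm, <- fsum_scal_l. apply fsum_ext. intros i _.
    unfold Rdiv. ring.
Qed.

Lemma S_term_pos_closed_form p m r : (1 <= p)%nat -> (1 <= m)%nat -> (1 <= r)%nat ->
  is_series (S_term (Z.of_nat p) m 1 r)
    (sumR 2 m (fun i => (-1) ^ (m - i) / INR r ^ (m - i + 1) * Spp (Z.of_nat p) i)
     + (-1) ^ (m - 1) / INR r ^ m * zeta (p + 1)
     + (-1) ^ (m - 1) / INR r ^ m *
         (sumR 1 (r - 1) (fun j => (-1) ^ (p + 1) * H 1 j / INR j ^ p)
          + sumR 2 p (fun l => (-1) ^ (p - l) * H (Z.of_nat (p - l + 1)) (r - 1) * zeta l))).
Proof.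
  intros Hp Hm Hr.
  replace (sumR 2 m _ + _ + _) with (pf_unroll (Spp (Z.of_nat p)) (harm_diff_zeta p r) (INR r) m).
  - apply is_series_S_term_pos; assumption.
  - unfold pf_unroll. rewrite harm_diff_zeta_eq by exact Hp. ring.
Qed.

(** * Bernoulli numbers and Faulhaber's formula *)

(* Taylor coefficients of [(1 - exp (- x)) / x]. *)
Definition expm_coef (k : nat) : R := (-1) ^ k / INR (fact (S k)).

(* [bern_upto n] agrees with [bern_coef] on [0 .. n]; it realises the strong recursion
   [bern_coef_S], which makes [bern_coef] the reciprocal series of [expm_coef]. *)
Fixpoint bern_upto (n : nat) : nat -> R :=
  match n with
  | O => fun _ => 1
  | S n' => fun j => if (j <=? n')%nat then bern_upto n' j
                     else - fsum (fun k => expm_coef (S k) * bern_upto n' (n' - k)) (S n')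
  end.

Definition bern_coef (n : nat) : R := bern_upto n n.

Lemma bern_upto_le n j : (j <= n)%nat -> bern_upto n j = bern_coef j.
Proof.
  induction n as [|n IH]; intros Hj; [now replace j with O by lia|].
  destruct (Nat.eq_dec j (S n)) as [->|Hne]; [reflexivity|].
  simpl. destruct (Nat.leb_spec j n); [apply IH; lia | lia].
Qed.

Lemma bern_coef_S n : bern_coef (S n) = - fsum (fun k => expm_coef (S k) * bern_coef (n - k)) (S n).
Proof.
  unfold bern_coef at 1. cbn [bern_upto]. rewrite (proj2 (Nat.leb_gt (S n) n)) by lia.
  f_equal. apply fsum_ext. intros k Hk. now rewrite bern_upto_le by lia.
Qed.

Lemma expm_coef_0 : expm_coef 0 = 1.
Proof. unfold expm_coef. simpl. field. Qed.

Lemma PS_mult_expm_bern n : PS_mult expm_coef bern_coef n = if (n =? 0)%nat then 1 else 0.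
Proof.
  unfold PS_mult. rewrite sum_f_R0_fsum, fsum_Sl, expm_coef_0, Nat.sub_0_r.
  destruct n as [|n]; simpl Nat.eqb.
  - simpl. unfold bern_coef. simpl. ring.
  - rewrite bern_coef_S. simpl Nat.sub. ring.
Qed.

Lemma pow2_le_fact k : 2 ^ k <= INR (fact (S k)).
Proof.
  induction k as [|k IH]; [simpl; lra|].
  rewrite fact_simpl, mult_INR, (S_INR (S k)), S_INR. simpl pow.
  pose proof (pos_INR k). pose proof (pow_le 2 k ltac:(lra)). nra.
Qed.

Lemma Rabs_expm_coef k : Rabs (expm_coef k) = / INR (fact (S k)).
Proof.
  unfold expm_coef, Rdiv. rewrite Rabs_mult, pow_1_abs, Rmult_1_l, Rabs_inv.
  now rewrite Rabs_pos_eq by apply pos_INR.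
Qed.

Lemma fsum_geom_half n : fsum (fun k => / 2 ^ S k) n = 1 - / 2 ^ n.
Proof.
  induction n as [|n IH]; cbn [fsum]; [simpl; lra|].
  rewrite IH. assert (0 < 2 ^ n) by (apply pow_lt; lra). simpl pow. field. lra.
Qed.

Lemma Rabs_bern_coef_le_1 n : Rabs (bern_coef n) <= 1.
Proof.
  induction n as [n IH] using (well_founded_induction lt_wf).
  destruct n as [|n]; [unfold bern_coef; simpl; rewrite Rabs_R1; lra|].
  rewrite bern_coef_S, Rabs_Ropp. eapply Rle_trans; [apply Rabs_fsum_le|].
  eapply Rle_trans; [apply (fsum_le _ (fun k => / 2 ^ S k))|].
  - intros k Hk. rewrite Rabs_mult, Rabs_expm_coef.
    pose proof (IH (n - k)%nat ltac:(lia)). pose proof (Rabs_pos (bern_coef (n - k))).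
    assert (/ INR (fact (S (S k))) <= / 2 ^ S k).
    { apply Rinv_le_contravar; [apply pow_lt; lra | apply pow2_le_fact]. }
    assert (0 <= / INR (fact (S (S k)))) by (apply Rlt_le, Rinv_0_lt_compat, INR_fact_lt_0).
    nra.
  - rewrite fsum_geom_half. assert (0 < / 2 ^ S n) by (apply Rinv_0_lt_compat, pow_lt; lra). lra.
Qed.

Lemma CV_radius_ge_1 a : (forall n, Rabs (a n) <= 1) -> Rbar_le 1 (CV_radius a).
Proof.
  intros Ha. apply (proj1 (CV_radius_bounded a)). exists 1. intros n.
  rewrite pow1, Rmult_1_r. apply Ha.
Qed.

Lemma is_pseries_R a x l : is_pseries a x l <-> is_series (fun k => x ^ k * a k) l.
Proof. split; apply is_series_ext; intros k; rewrite ?pow_n_pow; reflexivity. Qed.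

Lemma is_pseries_expm_coef x : x <> 0 -> is_pseries expm_coef x ((1 - exp (- x)) / x).
Proof.
  intros Hx. apply is_pseries_R.
  pose proof (proj1 (is_pseries_R _ _ _) (is_exp_Reals (- x))) as Hexp.
  assert (Htail : is_series (fun k => (- x) ^ S k * / INR (fact (S k))) (exp (- x) - 1)).
  { apply (is_series_incr_1 (fun k => (- x) ^ k * / INR (fact k))).
    match goal with |- is_series _ ?l => replace l with (exp (- x)); [exact Hexp|] end.
    change (exp (- x) = exp (- x) - 1 + 1 * / 1). field. }
  replace ((1 - exp (- x)) / x) with (- / x * (exp (- x) - 1)) by (field; exact Hx).
  eapply is_series_ext_R; [|apply is_series_scal_R, Htail].
  intros k. unfold expm_coef. replace (- x) with (-1 * x) by ring. rewrite Rpow_mult_distr.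
  simpl pow. field. split; [apply INR_fact_neq_0 | exact Hx].
Qed.

Lemma PSeries_unit x : PSeries (fun n => if (n =? 0)%nat then 1 else 0) x = 1.
Proof.
  apply is_pseries_unique, is_pseries_R, is_series_fsum_iff.
  apply is_lim_seq_ext with (fun _ => 1); [|apply is_lim_seq_const].
  intros N. induction N as [|N IH]; cbn [fsum] in *; simpl Nat.eqb; [simpl; ring | rewrite <- IH; ring].
Qed.

Lemma bern_gf_PSeries x : Rabs x < 1 -> bern_gf x = PSeries bern_coef x.
Proof.
  intros Hx. unfold bern_gf. destruct (Req_EM_T x 0) as [->|Hx0].
  - now rewrite PSeries_0.
  - assert (Hrad : forall a, (forall n, Rabs (a n) <= 1) -> Rbar_lt (Rabs x) (CV_radius a)).
    { intros a Ha. apply Rbar_lt_le_trans with 1; [exact Hx | apply CV_radius_ge_1, Ha]. }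
    assert (Hexpm : forall n, Rabs (expm_coef n) <= 1).
    { intros n. rewrite Rabs_expm_coef. rewrite <- Rinv_1. apply Rinv_le_contravar; [lra|].
      apply (le_INR 1), lt_O_fact. }
    pose proof (PSeries_mult _ _ x (Hrad _ Hexpm) (Hrad _ Rabs_bern_coef_le_1)) as E.
    rewrite (PSeries_ext _ _ x PS_mult_expm_bern), PSeries_unit,
      (is_pseries_unique _ _ _ (is_pseries_expm_coef x Hx0)) in E.
    assert (1 - exp (- x) <> 0) by (intros Z; rewrite Z in E; unfold Rdiv in E; lra).
    apply Rmult_eq_reg_l with ((1 - exp (- x)) / x).
    + rewrite <- E. field. split; assumption.
    + unfold Rdiv. apply Rmult_integral_contrapositive. split; [|apply Rinv_neq_0_compat]; assumption.
Qed.

Lemma Bplus_bern_coef n : Bplus n = INR (fact n) * bern_coef n.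
Proof.
  assert (Hrad : Rbar_lt 0 (CV_radius bern_coef)).
  { eapply Rbar_lt_le_trans; [|apply CV_radius_ge_1, Rabs_bern_coef_le_1]. simpl. lra. }
  unfold Bplus. rewrite (Derive_n_ext_loc bern_gf (PSeries bern_coef)), Derive_n_coef.
  - ring.
  - exact Hrad.
  - exists (mkposreal 1 Rlt_0_1). intros y Hy. apply bern_gf_PSeries.
    change (Rabs (y - 0) < 1) in Hy. now rewrite Rminus_0_r in Hy.
Qed.

Lemma Bplus_binomial_sum q : (1 <= q)%nat ->
  fsum (fun l => Binomial.C q l * Bplus l * (-1) ^ (q - l)) q = if (q =? 1)%nat then -1 else 0.
Proof.
  intros Hq. destruct q as [|n]; [lia|].
  transitivity (- INR (fact (S n)) * PS_mult expm_coef bern_coef n).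
  - unfold PS_mult. rewrite sum_f_R0_fsum, (fsum_rev (fun k => expm_coef k * bern_coef (n - k))).
    rewrite <- fsum_scal_l. apply fsum_ext. intros l Hl.
    replace (S n - 1 - l)%nat with (n - l)%nat by lia. replace (n - (n - l))%nat with l by lia.
    rewrite Bplus_bern_coef. unfold Binomial.C, expm_coef.
    replace (S n - l)%nat with (S (n - l)) by lia. simpl pow.
    pose proof (INR_fact_neq_0 l). pose proof (INR_fact_neq_0 (S (n - l))). field. split; assumption.
  - rewrite PS_mult_expm_bern. destruct n; simpl; ring.
Qed.

Lemma binomial_n_n q : Binomial.C q q = 1.
Proof. unfold Binomial.C. rewrite Nat.sub_diag. simpl. field. apply INR_fact_neq_0. Qed.

Lemma binomial_S_n q : Binomial.C (S q) q = INR (S q).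
Proof.
  unfold Binomial.C. replace (S q - q)%nat with 1%nat by lia. rewrite fact_simpl, mult_INR.
  simpl (INR (fact 1)). field. apply INR_fact_neq_0.
Qed.

Lemma binomial_mul_comm n l i : (l + i <= n)%nat ->
  Binomial.C n l * Binomial.C (n - l) i = Binomial.C n i * Binomial.C (n - i) l.
Proof.
  intros Hli. unfold Binomial.C. replace (n - l - i)%nat with (n - i - l)%nat by lia.
  pose proof (INR_fact_neq_0 l). pose proof (INR_fact_neq_0 i). pose proof (INR_fact_neq_0 (n - l)).
  pose proof (INR_fact_neq_0 (n - i)). pose proof (INR_fact_neq_0 (n - i - l)).
  field. repeat split; assumption.
Qed.

Lemma pow_sub_pow_pred y q :
  y ^ q - (y - 1) ^ q = - fsum (fun i => Binomial.C q i * y ^ i * (-1) ^ (q - i)) q.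
Proof.
  replace (y - 1) with (y + -1) by ring. rewrite binomial, sum_f_R0_fsum. cbn [fsum].
  rewrite binomial_n_n, Nat.sub_diag. simpl (_ ^ 0). ring.
Qed.

Definition faulhaber_poly (p : nat) (y : R) : R :=
  fsum (fun l => Binomial.C (S p) l * Bplus l * y ^ (S p - l)) (S p).

Lemma faulhaber_poly_diff p y : faulhaber_poly p y - faulhaber_poly p (y - 1) = INR (S p) * y ^ p.
Proof.
  set (c l i := Binomial.C (S p) l * Bplus l * (Binomial.C (S p - l) i * y ^ i * (-1) ^ (S p - l - i))).
  unfold faulhaber_poly. rewrite <- fsum_minus.
  transitivity (-1 * fsum (fun l => fsum (c l) (S p - l)) (S p)).
  { rewrite <- fsum_scal_l. apply fsum_ext. intros l _.
    rewrite <- Rmult_minus_distr_l, pow_sub_pow_pred. unfold c. rewrite fsum_scal_l. ring. }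
  rewrite fsum_triangle_swap.
  rewrite (fsum_ext _ (fun i => Binomial.C (S p) i * y ^ i * (if (S p - i =? 1)%nat then -1 else 0))).
  - cbn [fsum]. rewrite (fsum_ext _ (fun _ => 0)), fsum_zero.
    + replace (S p - p =? 1)%nat with true by (symmetry; apply Nat.eqb_eq; lia).
      rewrite binomial_S_n. ring.
    + intros i Hi. replace (S p - i =? 1)%nat with false by (symmetry; apply Nat.eqb_neq; lia). ring.
  - intros i Hi. rewrite <- Bplus_binomial_sum, <- fsum_scal_l by lia. apply fsum_ext. intros l Hl.
    unfold c. replace (S p - l - i)%nat with (S p - i - l)%nat by lia.
    transitivity ((Binomial.C (S p) l * Binomial.C (S p - l) i) * Bplus l * y ^ i * (-1) ^ (S p - i - l));
      [ring|].
    rewrite binomial_mul_comm by lia. ring.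
Qed.

Lemma faulhaber p n : fsum (fun k => INR (S k) ^ p) n = / INR (S p) * faulhaber_poly p (INR n).
Proof.
  assert (Hp : INR (S p) <> 0) by apply not_0_INR, Nat.neq_succ_0.
  induction n as [|n IH].
  - cbn [fsum]. unfold faulhaber_poly. rewrite (fsum_ext _ (fun _ => 0)), fsum_zero; [ring|].
    intros l Hl. simpl INR. rewrite pow_i by lia. ring.
  - cbn [fsum]. rewrite IH.
    pose proof (faulhaber_poly_diff p (INR (S n))) as E. rewrite S_INR in E at 2.
    replace (INR n + 1 - 1) with (INR n) in E by ring.
    apply Rmult_eq_reg_l with (INR (S p)); [|exact Hp].
    rewrite Rmult_plus_distr_l, <- !Rmult_assoc, Rinv_r, !Rmult_1_l by exact Hp. lra.
Qed.

Lemma S_term_neg_closed_form m r p : (1 <= m)%nat -> (1 <= r)%nat -> (p + 2 <= m)%nat ->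
  is_series (S_term (- Z.of_nat p) m 1 r)
    (/ INR (p + 1) * sumR 0 p (fun l =>
        Binomial.C (p + 1) l * Bplus l *
        (sumR 2 (m - p - 1 + l) (fun i =>
            (-1) ^ (m - p - 1 + l - i) / INR r ^ (m - p + l - i) * zeta i)
         + (-1) ^ (m - p - 2 + l) / INR r ^ (m - p - 1 + l) * H 1 r))).
Proof.
  intros Hm Hr Hpm.
  set (T k n := 1 / (INR (S n) ^ k * INR (S n + r))).
  apply is_series_ext_R with
    (fun n => / INR (S p) * fsum (fun l => Binomial.C (S p) l * Bplus l * T (m - p - 1 + l)%nat n) (S p)).
  - intros n. unfold S_term, T. rewrite H_opp_of_nat, faulhaber, pow_1, plus_INR. unfold faulhaber_poly.
    rewrite <- fsum_scal_l. symmetry. unfold Rdiv at 1.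
    rewrite Rmult_assoc, (Rmult_comm (fsum _ _)), <- !fsum_scal_l.
    apply fsum_ext. intros l Hl.
    pose proof (INR_S_pos n). pose proof (INR_S_pos p). pose proof (pos_INR r).
    replace (INR (S n) ^ m) with (INR (S n) ^ (m - p - 1 + l) * INR (S n) ^ (S p - l))
      by (rewrite <- pow_add; f_equal; lia).
    assert (INR (S n) ^ (m - p - 1 + l) <> 0) by (apply pow_nonzero; lra).
    assert (INR (S n) ^ (S p - l) <> 0) by (apply pow_nonzero; lra).
    field. repeat split; (assumption || lra).
  - replace (p + 1)%nat with (S p) by lia. rewrite sumR_fsum, Nat.sub_0_r, Nat.add_1_r.
    apply is_series_scal_R, is_series_fsum. intros l Hl.
    apply is_series_scal_R.
    replace (sumR 2 _ _ + _) with (pf_unroll zeta (harm 1 r) (INR r) (m - p - 1 + l)).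
    + apply is_series_inv_pow_mul_add; lia.
    + unfold pf_unroll. rewrite (H_of_nat 1) by lia. simpl (0 + l)%nat. f_equal.
      * apply sumR_ext. intros i Hi. do 3 f_equal. lia.
      * do 3 f_equal. lia.
Qed.

Theorem lemma2 :
  (forall p m r : nat, (1 <= p)%nat -> (1 <= m)%nat -> (1 <= r)%nat ->
    is_series (S_term (Z.of_nat p) m 1 r)
      (sumR 2 m (fun i => (-1) ^ (m - i) / INR r ^ (m - i + 1) * Spp (Z.of_nat p) i)
       + (-1) ^ (m - 1) / INR r ^ m * zeta (p + 1)
       + (-1) ^ (m - 1) / INR r ^ m *
           (sumR 1 (r - 1) (fun j => (-1) ^ (p + 1) * H 1 j / INR j ^ p)
            + sumR 2 p (fun l => (-1) ^ (p - l) * H (Z.of_nat (p - l + 1)) (r - 1) * zeta l))))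
  /\
  (forall m r p : nat, (1 <= m)%nat -> (1 <= r)%nat -> (p + 2 <= m)%nat ->
    is_series (S_term (- Z.of_nat p) m 1 r)
      (/ INR (p + 1) * sumR 0 p (fun l =>
          Binomial.C (p + 1) l * Bplus l *
          (sumR 2 (m - p - 1 + l) (fun i =>
              (-1) ^ (m - p - 1 + l - i) / INR r ^ (m - p + l - i) * zeta i)
           + (-1) ^ (m - p - 2 + l) / INR r ^ (m - p - 1 + l) * H 1 r)))).
Proof. split; [exact S_term_pos_closed_form | exact S_term_neg_closed_form]. Qed.
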